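(* Let $\mathcal F$ be a class of real-valued functions on a measurable space $\mathcal S$ with $\sup_{f\in\mathcal F}\mathrm{Var}(f(X))\le\sigma^2$ for some $\sigma^2>0$, and let $\hat f=\arg\min_{f\in\mathcal F}\hat\mu_f$ (assumed to exist) and $m^*=\inf_{f\in\mathcal F}m_f$ (assumed attained). There exist constants $C_1,C_2,C_3,C_4>0$ depending only on $\sigma^2$ such that the following holds. Let $\varepsilon\in(0,1)$ and suppose that (i) $\mathscr X=\{m_f-\hat\mu_f: f\in\mathcal F\}$ is an exponential class with $N(\delta)\le C\exp(M\delta^{-p})$ for all $0<\delta\le n$, for some constants $C,M,p>0$, $p\ne2$; and (ii) writing $a=\frac{n^2\varepsilon}{C_2}\wedge\frac n4$, $$\frac{n^{3/2}\varepsilon^2}{C_1}\ \ge\ \Big\{\frac{2\sqrt M}{2-p}\Big(n^{1-\frac p2}-a^{1-\frac p2}\Big)+\sqrt{\log C}\,(n-a)\,\mathbf 1_{\{C>1\}}\Big\}\vee n^{1/2}.$$ Then $$\mathbb P\big(m_{\hat f}-m^*\ge n^2\varepsilon\big)\le C_3\exp\Big(-\frac{n\varepsilon^2}{C_4}\Big).$$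
   Context: $(X_i)_{i=1}^n$ are i.i.d. random variables taking values in $\mathcal S$ (e.g. feature–target pairs $(Z_i,Y_i)$, with $f$ playing the role of a loss $\ell(g(\cdot),\cdot)$), and $X$ is independent of them with the same distribution. For $f\in\mathcal F$, $m_f=\mathbb E f(X)$ (the risk). Let $\phi:\mathbb R\to\mathbb R$ be non-decreasing, differentiable, with $-\log(1-x+x^2/2)\le\phi(x)\le\log(1+x+x^2/2)$. For a parameter $\alpha>0$, Catoni's estimator $\hat\mu_f$ is a value (chosen arbitrarily if not unique) with $\frac{1}{n\alpha}\sum_{i=1}^n\phi(\alpha(f(X_i)-\hat\mu_f))=0$. Standing assumption: for every $f\in\mathcal F$ and $x>0$, $\mathbb P(|m_f-\hat\mu_f|\ge x)\le 2\exp\big(-\frac{nx^2}{2(\sigma^2+x^2)}\big)$. Distance on $\mathscr X$: $d(U,V)=\|U-V\|$, the essential supremum norm on the underlying probability space (assumed finite). Bracketing covering number $N(\delta)$: the smallest $m$ such that there are pairs $[D_j^L,D_j^U]\in\mathscr X\times\mathscr X$, $j=1,\dots,m$, with each $D\in\mathscr X$ satisfying $D_j^L\le D\le D_j^U$ and $d(D_j^L,D_j^U)\le\delta$ for some $j$. $\mathscr X$ is an exponential class if $N(\kappa)\le A\exp(B\kappa^{-r})$ for all $0<\kappa\le n$ for some constants $A,B,r>0$. Probabilities are outer probabilities if needed. *)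

From HB Require Import structures.
From mathcomp Require Import all_boot all_order all_algebra.
From mathcomp Require Import all_classical all_reals all_analysis ess_sup_inf.
Set Implicit Arguments. Unset Strict Implicit. Unset Printing Implicit Defensive.
Import Order.TTheory GRing.Theory Num.Def Num.Theory.
Import numFieldNormedType.Exports.
Local Open Scope classical_set_scope.
Local Open Scope ring_scope.

Section defs.
Context {R : realType} {dO : measure_display} {Omega : measurableType dO}.
Variable P : probability Omega R.

Definition outerP (A : set Omega) : \bar R :=
  ereal_inf [set P B | B in [set B | measurable B /\ A `<=` B]].

Definition mutually_independent {dS : measure_display} {S : measurableType dS}
  {I : finType} (Y : I -> Omega -> S) : Prop :=
  forall (J : {set I}) (A : I -> set S), (forall i, measurable (A i)) ->
    P (\bigcap_(i in [set j | j \in J]) (Y i @^-1` A i)) =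
    (\prod_(i in J) P (Y i @^-1` A i))%E.

Definition same_distribution {dS : measure_display} {S : measurableType dS}
  (Y Z : Omega -> S) : Prop :=
  forall A : set S, measurable A -> P (Y @^-1` A) = P (Z @^-1` A).

Definition esdist (U V : Omega -> R) : \bar R :=
  ess_sup P (fun w => (`|U w - V w|)%:E).

Definition has_bracketing (Xc : set (Omega -> R)) (delta : R) (k : nat) : Prop :=
  exists L U : nat -> Omega -> R,
    (forall j, (j < k)%N -> [/\ Xc (L j), Xc (U j) & (esdist (L j) (U j) <= delta%:E)%E]) /\
    (forall D, Xc D -> exists j, (j < k)%N /\ forall w, L j w <= D w <= U j w).

(* bracketing covering number N(delta) (= +oo if no finite bracketing) *)
Definition bracketing_number (Xc : set (Omega -> R)) (delta : R) : \bar R :=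
  ereal_inf [set (k%:R)%:E | k in [set k : nat | has_bracketing Xc delta k]].

End defs.

(* On the event m_fhat - m_fstar >= n^2 eps, the minimality of fhat for muhat forces
   |m_f - muhat_f| >= n^2 eps / 2 for f = fhat or f = fstar.  Bracket the class
   Xc = {m_f - muhat_f} at scale d = 2a with brackets taken in Xc: a deviation x + d of
   an element forces a deviation x of the lower end of its bracket, unless the bracket
   is wider than d, which is a null event.  The union bound over the N(d) brackets and
   the standing assumption bound the probability by N(d) * 2 exp(-n x^2 / (2 (sigma^2 + x^2)))
   with x = n^2 eps / 2 - d >= eps / 4.  Condition (ii) bounds both sqrt (ln C) (n - a) and
   the entropy integral int_a^n sqrt (M u^-p) du, which is at least ln 2 * a * sqrt (M (2a)^-p);
   hence ln N(d) <= ln C + M (2a)^-p = O(n eps^2 / C1^2), which for C1 large enough is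
   absorbed by the exponent n eps^2 / (32 (sigma^2 + 1)). *)

From HB Require Import structures.
From mathcomp Require Import all_boot all_order all_algebra.
From mathcomp Require Import all_classical all_reals all_analysis ess_sup_inf.
From mathcomp Require Import ring lra.
Import Order.TTheory GRing.Theory Num.Def Num.Theory.
Import numFieldNormedType.Exports.
Local Open Scope classical_set_scope.
Local Open Scope ring_scope.

Section outer_probability.
Set Implicit Arguments. Unset Strict Implicit.
Context {R : realType} {dO : measure_display} {Omega : measurableType dO}.
Variable P : probability Omega R.

Lemma outerP_le_measure (A B : set Omega) :
  measurable B -> A `<=` B -> (outerP P A <= P B)%E.
Proof. by move=> mB AB; apply: ereal_inf_lbound; exists B. Qed.

Lemma le_outerP (A B : set Omega) : A `<=` B -> (outerP P A <= outerP P B)%E.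
Proof.
move=> AB; apply: le_ereal_inf_tmp => _ [C [mC BC] <-].
exact: outerP_le_measure mC (subset_trans AB BC).
Qed.

Lemma outerP_cover (A : set Omega) (r e : R) : (outerP P A <= r%:E)%E -> 0 < e ->
  exists B, [/\ measurable B, A `<=` B & (P B <= (r + e)%:E)%E].
Proof.
move=> Ar e0; have : (outerP P A < (r + e)%:E)%E.
  by apply: le_lt_trans Ar _; rewrite lte_fin ltrDl.
by move=> /ereal_inf_lt [_ [B [mB AB] <-] /ltW PB]; exists B.
Qed.

Lemma outerP_setU_le (A B : set Omega) (r s : R) :
  (outerP P A <= r%:E)%E -> (outerP P B <= s%:E)%E ->
  (outerP P (A `|` B) <= (r + s)%:E)%E.
Proof.
move=> Ar Bs; apply/lee_addgt0Pr => e e0.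
have e20 : 0 < e / 2 by rewrite divr_gt0.
have [A' [mA' AA' PA']] := outerP_cover Ar e20.
have [B' [mB' BB' PB']] := outerP_cover Bs e20.
apply: le_trans (outerP_le_measure (measurableU _ _ mA' mB') (setUSS AA' BB')) _.
apply: le_trans (measureU2 P mA' mB') _; apply: le_trans (leeD PA' PB') _.
by rewrite -EFinD lee_fin addrACA -splitr.
Qed.

Lemma outerP_bigcup_le (G : nat -> set Omega) (r : R) (k : nat) :
  (forall j, (j < k)%N -> (outerP P (G j) <= r%:E)%E) ->
  (outerP P [set w | exists2 j, (j < k)%N & G j w] <= (k%:R * r)%:E)%E.
Proof.
elim: k => [|k IH] Gr.
  rewrite mul0r; apply: le_trans (outerP_le_measure measurable0 _) _.
    by move=> w [].
  by rewrite measure0.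
have -> : [set w | exists2 j, (j < k.+1)%N & G j w] =
          [set w | exists2 j, (j < k)%N & G j w] `|` G k.
  apply/seteqP; split => w /=.
    by move=> [j]; rewrite ltnS leq_eqVlt => /orP[/eqP->|jk Gj]; [right|left; exists j].
  by case=> [[j jk Gj]|Gk]; [exists j => //; exact: ltnW|exists k].
rewrite -nat1r mulrDl mul1r addrC.
by apply: outerP_setU_le; [apply: IH => j jk; apply: Gr; exact: ltnW|exact: Gr].
Qed.

Lemma outerP_gt_ess_sup (f : Omega -> R) (d : R) :
  (ess_sup P (fun w => (f w)%:E) <= d%:E)%E ->
  (outerP P [set w | (d < f w)%R] <= 0%:E)%E.
Proof.
move=> /ess_supP [N [mN N0 sub]]; apply: le_trans (outerP_le_measure mN _) _.
  by move=> w /= dw; apply: sub => /=; rewrite lee_fin; apply/negP; rewrite -ltNge.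
by rewrite N0.
Qed.

Lemma bracketing_number_ltP (Xc : set (Omega -> R)) (d B : R) :
  (bracketing_number P Xc d < B%:E)%E ->
  exists2 k : nat, k%:R < B & has_bracketing P Xc d k.
Proof. by case/ereal_inf_lt => _ [k Xk <-]; rewrite lte_fin => kB; exists k. Qed.

Lemma outerP_bracketing_le (Xc : set (Omega -> R)) (d x B : R) (k : nat) :
  has_bracketing P Xc d k ->
  (forall D, Xc D -> (outerP P [set w | (x <= `|D w|)%R] <= B%:E)%E) ->
  (outerP P [set w | exists2 D, Xc D & (x + d <= `|D w|)%R] <= (k%:R * B)%:E)%E.
Proof.
move=> [L [U [LU cover]]] tail.
pose G j := [set w | (x <= `|L j w|)%R] `|` [set w | (d < `|L j w - U j w|)%R].
apply: le_trans (le_outerP (B := [set w | exists2 j, (j < k)%N & G j w]) _) _.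
  move=> w [D XD xdD] /=; have [j [jk /(_ w) /andP[LD DU]]] := cover D XD.
  exists j => //; rewrite /G /=; have [LUd|] := lerP `|L j w - U j w| d; [left|by right].
  have DLd : `|D w - L j w| <= d.
    rewrite distrC in LUd; apply: le_trans LUd.
    by rewrite !ger0_norm ?lerB ?subr_ge0 // (le_trans LD).
  by have := ler_normD (L j w) (D w - L j w); rewrite addrC subrK; lra.
rewrite -[B]addr0; apply: outerP_bigcup_le => j jk.
have [_ _ LUd] := LU j jk.
apply: outerP_setU_le; first by apply: tail; case: (LU j jk).
exact: outerP_gt_ess_sup LUd.
Qed.

End outer_probability.

Lemma excess_risk_sub_deviation {R : realFieldType} {T W : Type} (F : set T) (m : T -> R)
    (muhat : T -> W -> R) (fhat : W -> T) (fstar : T) (t : R) :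
  (forall w, F (fhat w) /\ forall f, F f -> muhat (fhat w) w <= muhat f w) -> F fstar ->
  [set w | 2 * t <= m (fhat w) - m fstar] `<=`
  [set w | exists2 D, [set (fun w => m f - muhat f w) | f in F] D & t <= `|D w|].
Proof.
move=> fhat_min Fstar w /= tm; have [Fhat /(_ _ Fstar) muhat_le] := fhat_min w.
have [thatle|hatlt] := lerP t (m (fhat w) - muhat (fhat w) w).
  by exists (fun v => m (fhat w) - muhat (fhat w) v); [exists (fhat w)|exact: le_trans (ler_norm _)].
exists (fun v => m fstar - muhat fstar v); first by exists fstar.
by rewrite -normrN; apply: le_trans (ler_norm _); lra.
Qed.

Definition entropy_const {R : realType} : R := 2 + 64 / ln 2 ^+ 2.
Definition const_C4 {R : realType} (sigma2 : R) : R := 64 * (sigma2 + 1).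
Definition const_C1 {R : realType} (sigma2 : R) : R := const_C4 sigma2 * entropy_const + 1.

Section real_bounds.
Set Implicit Arguments. Unset Strict Implicit.
Variable R : realType.
Implicit Types a c q x y B N M p n s eps C W Z k ne : R.

Lemma ln2_gt0 : 0 < ln (2 : R).
Proof. by apply: ln_gt0; lra. Qed.

Lemma entropy_const_gt0 : 0 < entropy_const :> R.
Proof.
have l22 : 0 < ln (2 : R) ^+ 2 := exprn_gt0 _ ln2_gt0.
by rewrite /entropy_const addr_gt0 ?divr_gt0.
Qed.

Lemma const_C4_gt0 s : 0 <= s -> 0 < const_C4 s.
Proof. by rewrite /const_C4 => s0; apply: mulr_gt0; lra. Qed.

Lemma const_C1_gt0 s : 0 <= s -> 0 < const_C1 s.
Proof.
move=> /const_C4_gt0 C40; rewrite /const_C1 addr_gt0 //.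
exact: mulr_gt0 C40 entropy_const_gt0.
Qed.

Lemma minr_scale_bounds N eps : 1 <= N -> 0 < eps < 1 ->
  [/\ N * eps / 8 <= minr (N ^+ 2 * eps / 8) (N / 4), 4 * minr (N ^+ 2 * eps / 8) (N / 4) <= N
    & eps <= 4 * (N ^+ 2 * eps / 2 - 2 * minr (N ^+ 2 * eps / 8) (N / 4))].
Proof.
move=> N1 /andP[eps0 eps1]; have N2 : 1 <= N ^+ 2 by rewrite expr2; nra.
set a := minr _ _.
have aN2 : a <= N ^+ 2 * eps / 8 by rewrite ge_min lexx.
have aN : a <= N / 4 by rewrite ge_min lexx orbT.
have epsN2 : eps <= N ^+ 2 * eps by rewrite ler_peMl // ltW.
split; [|lra|lra].
by rewrite le_min; apply/andP; split; nra.
Qed.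

Lemma ln2_powR2_le q : q != 0 -> q <= 1 -> ln 2 * 2 `^ q / 2 <= (2 `^ q - 1) / q.
Proof.
move=> q0 q1; have l2 := ln2_gt0.
have -> : 2 `^ q = expR (q * ln 2) by rewrite /powR gt_eqF //; lra.
set y := expR (q * ln 2); have y0 : 0 < y := expR_gt0 _.
case/orP: (lt_total q0) => [qlt0|qgt0].
  rewrite ler_ndivlMr //.
  have := expR_ge1Dx (- (q * ln 2)); rewrite expRN -/y -(ler_pM2r y0).
  rewrite mulVf ?gt_eqF // => yle.
  have : q * ln 2 * y <= 0 by rewrite !pmulr_lle0 // ltW.
  nra.
rewrite ler_pdivlMr //.
have ley : 1 + q * ln 2 <= y := expR_ge1Dx _.
have yle2 : y <= 2.
  by rewrite -[X in _ <= X]lnK ?posrE // ler_expR ler_piMl //; lra.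
have : 0 <= (2 - y) * (q * ln 2) by apply: mulr_ge0; [lra|apply: mulr_ge0; lra].
have -> : ln 2 * y / 2 * q = y * (q * ln 2) / 2 by ring.
lra.
Qed.

Lemma powR_sub_div_ge0 x y q : 0 < x <= y -> q != 0 -> 0 <= (y `^ q - x `^ q) / q.
Proof.
move=> /andP[x0 xy] q0; have y0 := lt_le_trans x0 xy.
have lnxy : ln x <= ln y by rewrite ler_ln ?posrE.
rewrite /powR !gt_eqF //; case/orP: (lt_total q0) => [qlt0|qgt0].
  by rewrite mulr_le0 ?invr_le0 ?(ltW qlt0) // subr_le0 ler_expR ler_nM2l.
by rewrite divr_ge0 ?(ltW qgt0) // subr_ge0 ler_expR ler_pM2l.
Qed.

Lemma powR_sub_div_ge a N q : 0 < a -> 2 * a <= N -> q != 0 -> q <= 1 ->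
  ln 2 * a * (2 * a) `^ (q - 1) <= (N `^ q - a `^ q) / q.
Proof.
move=> a0 aN q0 q1; have a20 : 0 < 2 * a by lra.
have -> : (N `^ q - a `^ q) / q =
    (N `^ q - (2 * a) `^ q) / q + a `^ q * ((2 `^ q - 1) / q).
  by rewrite powRM ?(ltW a0) //; field.
have -> : ln 2 * a * (2 * a) `^ (q - 1) = a `^ q * (ln 2 * 2 `^ q / 2).
  have a2n0 : 2 * a != 0 by rewrite gt_eqF.
  rewrite powRB ?a2n0 ?implybT // powRr1 ?(ltW a20) // powRM ?(ltW a0) //.
  by field; rewrite gt_eqF.
apply: ler_wpDl; first by apply: powR_sub_div_ge0; lra.
by apply: ler_wpM2l; [exact: powR_ge0|exact: ln2_powR2_le].
Qed.

Lemma entropy_integral_ge M p a N : 0 <= M -> 0 < p -> p != 2 -> 0 < a -> 2 * a <= N ->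
  ln 2 * a * Num.sqrt (M * (2 * a) `^ (- p)) <=
  2 * Num.sqrt M / (2 - p) * (N `^ (1 - p / 2) - a `^ (1 - p / 2)).
Proof.
move=> M0 p0 p2 a0 aN; have a20 : 0 < 2 * a by lra.
have p2' : 2 - p != 0 by apply: contraNneq p2 => /eqP; rewrite subr_eq0 eq_sym.
set q := 1 - p / 2.
have q0 : q != 0 by rewrite /q; apply: contraNneq p2 => /eqP h; apply/eqP; lra.
have -> : 2 * Num.sqrt M / (2 - p) * (N `^ q - a `^ q) =
    Num.sqrt M * ((N `^ q - a `^ q) / q) by rewrite /q; field; rewrite /q.
have -> : Num.sqrt (M * (2 * a) `^ (- p)) = Num.sqrt M * (2 * a) `^ (q - 1).
  have -> : - p = (q - 1) + (q - 1) by rewrite /q; field.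
  have a2n0 : 2 * a != 0 by rewrite gt_eqF.
  rewrite sqrtrM // powRD ?a2n0 ?implybT // -expr2 sqrtr_sqr.
  by rewrite ger0_norm // powR_ge0.
rewrite mulrCA; apply: ler_wpM2l; first exact: sqrtr_ge0.
by apply: powR_sub_div_ge; rewrite /q //; lra.
Qed.

Lemma le_sqr_div_of_mul_sqrtr_le c x B : 0 < c -> 0 <= x -> c * Num.sqrt x <= B ->
  x <= (B / c) ^+ 2.
Proof.
move=> c0 x0 cxB; have sxB : Num.sqrt x <= B / c by rewrite ler_pdivlMr // mulrC.
rewrite -[x]sqr_sqrtr // ler_pXn2r ?nnegrE ?sqrtr_ge0 //.
exact: le_trans (sqrtr_ge0 _) sxB.
Qed.

Lemma bracketing_entropy_le N eps C M p (C1 : R) a :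
  1 <= N -> 0 < eps < 1 -> 0 <= M -> 0 < p -> p != 2 -> 0 < C1 ->
  N * eps / 8 <= a -> 4 * a <= N ->
  2 * Num.sqrt M / (2 - p) * (N `^ (1 - p / 2) - a `^ (1 - p / 2))
    + (if 1 < C then Num.sqrt (ln C) * (N - a) else 0) <= N `^ (3 / 2) * eps ^+ 2 / C1 ->
  ln C + M * (2 * a) `^ (- p) <= entropy_const * (N * eps ^+ 2) / C1 ^+ 2.
Proof.
move=> N1 /andP[eps0 eps1] M0 p0 p2 C10 epsa aN hii.
have N0 : 0 < N by lra.
have Neps0 : 0 < N * eps by exact: mulr_gt0.
have a0 : 0 < a by lra.
have l2 := ln2_gt0.
have sN : Num.sqrt N ^+ 2 = N by rewrite sqr_sqrtr // ltW.
set B := N `^ (3 / 2) * eps ^+ 2 / C1 in hii.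
have B_eq : B = N * Num.sqrt N * eps ^+ 2 / C1.
  rewrite /B (_ : 3 / 2 = 1 + 2^-1); last by field.
  by rewrite powRD ?powRr1 ?powR12_sqrt ?(ltW N0) // gt_eqF ?implybT.
set W := M * (2 * a) `^ (- p).
have W0 : 0 <= W by apply: mulr_ge0 => //; exact: powR_ge0.
have a2N : 2 * a <= N by lra.
have T1 : ln 2 * a * Num.sqrt W <= _ := entropy_integral_ge M0 p0 p2 a0 a2N.
set T2 := (if 1 < C then _ else _) in hii.
have T20 : 0 <= T2.
  by rewrite /T2; case: ifP => // _; apply: mulr_ge0; [exact: sqrtr_ge0|lra].
have T10 : 0 <= ln 2 * a * Num.sqrt W.
  by apply: mulr_ge0; [apply: mulr_ge0; lra|exact: sqrtr_ge0].
have Wle : W <= 64 / ln 2 ^+ 2 * (N * eps ^+ 2) / C1 ^+ 2.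
  have hW : ln 2 * (N * eps / 8) * Num.sqrt W <= B.
    apply: le_trans (_ : ln 2 * a * Num.sqrt W <= B); last by lra.
    by rewrite ler_wpM2r ?sqrtr_ge0 // ler_wpM2l // ltW.
  apply: le_trans (le_sqr_div_of_mul_sqrtr_le _ W0 hW) _; first by apply: mulr_gt0; lra.
  suff -> : (B / (ln 2 * (N * eps / 8))) ^+ 2 =
      64 / ln 2 ^+ 2 * (Num.sqrt N ^+ 2 * eps ^+ 2) / C1 ^+ 2 by rewrite sN.
  by rewrite B_eq; field; rewrite !gt_eqF.
have lnCle : ln C <= 2 * (N * eps ^+ 2) / C1 ^+ 2.
  have [Cgt1|Cle1] := ltP 1 C; last first.
    apply: le_trans (ln_le0 Cle1) _.
    have : 0 <= N * eps ^+ 2 by apply: mulr_ge0; [lra|exact: sqr_ge0].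
    by move=> ?; apply: divr_ge0; [lra|exact: sqr_ge0].
  rewrite /T2 Cgt1 in hii T20.
  have hC : 3 * N / 4 * Num.sqrt (ln C) <= B.
    apply: le_trans (_ : Num.sqrt (ln C) * (N - a) <= B); last by lra.
    by rewrite mulrC ler_wpM2l ?sqrtr_ge0 //; lra.
  have lnC0 : 0 <= ln C by apply: ln_ge0; exact: ltW.
  apply: le_trans (le_sqr_div_of_mul_sqrtr_le _ lnC0 hC) _; first by lra.
  suff -> : (B / (3 * N / 4)) ^+ 2 =
      16 / 9 * (Num.sqrt N ^+ 2 * (eps ^+ 2 * eps ^+ 2)) / C1 ^+ 2.
    rewrite sN ler_pM2r ?invr_gt0 ?exprn_gt0 //.
    have e4 : eps ^+ 2 * eps ^+ 2 <= eps ^+ 2.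
      by rewrite ger_pMl ?exprn_gt0 // expr_le1 //; lra.
    have := ler_wpM2l (ltW N0) e4.
    have : 0 <= N * eps ^+ 2 by apply: mulr_ge0; [lra|exact: sqr_ge0].
    lra.
  by rewrite B_eq; field; rewrite !gt_eqF.
rewrite /entropy_const !mulrDl; lra.
Qed.

Lemma tail_exponent_le n s eps x : 0 <= n -> 0 <= s -> 0 < eps <= 1 -> eps <= 4 * x ->
  expR (- (n * x ^+ 2) / (2 * (s + x ^+ 2))) <= expR (- (n * eps ^+ 2) / (32 * (s + 1))).
Proof.
move=> n0 s0 /andP[eps0 eps1] epsx; have x0 : 0 < x by lra.
have x20 : 0 < x ^+ 2 := exprn_gt0 _ x0.
rewrite ler_expR !mulNr lerN2 ler_pdivrMr; last by lra.
rewrite mulrAC ler_pdivlMr; last by lra.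
have eps2x : eps ^+ 2 <= 16 * x ^+ 2.
  by have := ler_pM (ltW eps0) (ltW eps0) epsx epsx; rewrite !expr2; lra.
have eps21 : eps ^+ 2 <= 1 by rewrite expr_le1 //; lra.
have : eps ^+ 2 * (s + x ^+ 2) <= 16 * x ^+ 2 * (s + 1).
  have := ler_wpM2r s0 eps2x; have := ler_wpM2r (ltW x20) eps21; lra.
move=> /(ler_wpM2l n0); lra.
Qed.

Lemma bracketing_tail_product_le s k C W Z ne : 0 <= s -> 0 < ne -> 0 < C -> 0 <= Z ->
  k <= 2 * (C * expR W) -> ln C + W <= entropy_const * ne / const_C1 s ^+ 2 ->
  Z <= expR (- ne / (32 * (s + 1))) ->
  k * (2 * Z) <= 4 * expR (- ne / const_C4 s).
Proof.
move=> s0 ne0 C0 Z0 kle lnCW Zle.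
have C40 := const_C4_gt0 s0; have K0 := @entropy_const_gt0.
have C1ge : const_C4 s * entropy_const <= const_C1 s ^+ 2.
  have : 0 <= const_C4 s * entropy_const by apply: mulr_ge0; exact: ltW.
  by rewrite /const_C1; nra.
have CW : C * expR W <= expR (ne / const_C4 s).
  rewrite -[C]lnK ?posrE // -expRD ler_expR; apply: le_trans lnCW _.
  rewrite ler_pdivrMr ?exprn_gt0 ?const_C1_gt0 // mulrAC ler_pdivlMr //.
  by have := ler_wpM2l (ltW ne0) C1ge; lra.
have : C * expR W * Z <= expR (- ne / const_C4 s).
  have -> : - ne / const_C4 s = ne / const_C4 s + - ne / (32 * (s + 1)).
    by rewrite /const_C4; field; rewrite gt_eqF //; lra.
  rewrite expRD; apply: ler_pM => //; apply: mulr_ge0; [lra|exact: ltW (expR_gt0 _)].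
have := ler_wpM2r (_ : 0 <= 2 * Z) kle; lra.
Qed.
End real_bounds.

Theorem theorem4 (R : realType) (sigma2 : R) (hsigma : 0 < sigma2) :
  exists C1 C2 C3 C4 : R, [/\ 0 < C1, 0 < C2, 0 < C3 & 0 < C4] /\
  forall (dS : measure_display) (S : measurableType dS)
         (dO : measure_display) (Omega : measurableType dO)
         (P : probability Omega R) (n : nat)
         (XS : 'I_n -> Omega -> S) (X : Omega -> S)
         (F : set (S -> R)) (phi : R -> R) (alpha : R)
         (muhat : (S -> R) -> Omega -> R)
         (fhat : Omega -> (S -> R)) (fstar : S -> R)
         (eps C M p : R),
    let m := fun f : S -> R => fine ('E_P[f \o X])%E in
    let Xc := [set (fun w => m f - muhat f w) | f in F] in
    let a := minr (n%:R ^+ 2 * eps / C2) (n%:R / 4) in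
    (0 < n)%N ->
    measurable_fun setT X -> (forall i, measurable_fun setT (XS i)) ->
    mutually_independent P
      (fun o : option 'I_n => match o with None => X | Some i => XS i end) ->
    (forall i, same_distribution P (XS i) X) ->
    (forall f, F f -> measurable_fun setT f) ->
    (forall f, F f -> (f \o X) \in Lfun P 2%:E) ->
    (forall f, F f -> ('V_P[f \o X] <= sigma2%:E)%E) ->
    {homo phi : x y / x <= y} -> (forall x, derivable phi x 1) ->
    (forall x, - ln (1 - x + x ^+ 2 / 2) <= phi x <= ln (1 + x + x ^+ 2 / 2)) ->
    0 < alpha ->
    (forall f w, F f ->
       (n%:R * alpha)^-1 * \sum_(i < n) phi (alpha * (f (XS i w) - muhat f w)) = 0) ->
    (* standing assumption *)
    (forall f (x : R), F f -> 0 < x ->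
       (outerP P [set w | (x <= `|m f - muhat f w|)%R]
        <= (2 * expR (- (n%:R * x ^+ 2) / (2 * (sigma2 + x ^+ 2))))%:E)%E) ->
    (forall w, F (fhat w) /\ forall f, F f -> muhat (fhat w) w <= muhat f w) ->
    F fstar -> (forall f, F f -> m fstar <= m f) ->
    0 < eps < 1 ->
    (* (i) exponential class *)
    0 < C -> 0 < M -> 0 < p -> p != 2 ->
    (forall delta : R, 0 < delta -> delta <= n%:R ->
       (bracketing_number P Xc delta <= (C * expR (M * powR delta (- p)))%:E)%E) ->
    (* (ii) *)
    powR n%:R (3 / 2) * eps ^+ 2 / C1 >=
      maxr (2 * Num.sqrt M / (2 - p) * (powR n%:R (1 - p / 2) - powR a (1 - p / 2))
            + (if 1 < C then Num.sqrt (ln C) * (n%:R - a) else 0))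
           (Num.sqrt n%:R) ->
    (outerP P [set w | (n%:R ^+ 2 * eps <= m (fhat w) - m fstar)%R]
      <= (C3 * expR (- (n%:R * eps ^+ 2) / C4))%:E)%E.
Proof.
exists (const_C1 sigma2), 8, 4, (const_C4 sigma2).
split; first by split; rewrite ?const_C1_gt0 ?const_C4_gt0 ?ltW.
move=> dS S dO Omega P n XS X F phi alpha muhat fhat fstar eps C M p m Xc a
  n0 _ _ _ _ _ _ _ _ _ _ _ _ tail fhat_min Fstar _ eps01 C0 M0 p0 p2 bracket hii.
have N1 : 1 <= n%:R :> R by rewrite ler1n.
have [epsa aN epsx] := minr_scale_bounds N1 eps01; rewrite -/a in epsa aN epsx.
case/andP: eps01 => eps0 eps1; have Neps0 : 0 < n%:R * eps by apply: mulr_gt0; lra.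
set d := 2 * a; set x := n%:R ^+ 2 * eps / 2 - d.
have d0 : 0 < d by rewrite /d; lra.
have dN : d <= n%:R by rewrite /d; lra.
have x0 : 0 < x by rewrite /x /d; lra.
set Z := expR (- (n%:R * x ^+ 2) / (2 * (sigma2 + x ^+ 2))).
set W := M * d `^ (- p).
have [k kle brk] : exists2 k : nat, k%:R < 2 * (C * expR W) & has_bracketing P Xc d k.
  apply: bracketing_number_ltP; apply: le_lt_trans (bracket d d0 dN) _.
  by rewrite lte_fin ltr_pMl ?mulr_gt0 ?expR_gt0 //; lra.
have -> : n%:R ^+ 2 * eps = 2 * (x + d) by rewrite /x; field.
apply: le_trans (le_outerP _ (excess_risk_sub_deviation fhat_min Fstar)) _.
apply: le_trans (outerP_bracketing_le (B := 2 * Z) brk _) _.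
  by move=> _ [f Ff <-]; exact: tail f x Ff x0.
move: hii; rewrite ge_max => /andP[hii _].
rewrite lee_fin; apply: bracketing_tail_product_le (ltW kle) _ _ => //.
- exact: ltW.
- by apply: mulr_gt0; [lra|exact: exprn_gt0].
- exact: ltW (expR_gt0 _).
- apply: bracketing_entropy_le hii => //; first by rewrite eps0 eps1.
    exact: ltW.
  exact: const_C1_gt0 (ltW hsigma).
- rewrite /Z; apply: tail_exponent_le epsx => //; first exact: ltW.
  by rewrite eps0 ltW.
Qed.
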